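(* Let $K=3$, let $\check\Sigma$ be a symmetric positive semidefinite $d_1d_2d_3\times d_1d_2d_3$ matrix, and let $\bar\Sigma_1,\bar\Sigma_2,\bar\Sigma_3$ be produced from $\check\Sigma$ by the hierarchical SVD procedure described in the context. Then: (i) with an appropriate choice of the signs of the leading singular vectors, each $\bar\Sigma_k$ ($k=1,2,3$) is symmetric and positive semidefinite; (ii) suppose $d_1,d_2,d_3$ are fixed, $\Sigma=\Sigma_3\otimes\Sigma_2\otimes\Sigma_1$ with each $\Sigma_k$ a $d_k\times d_k$ symmetric positive definite matrix normalized by $\|\Sigma_1\|_F=\|\Sigma_2\|_F=1$, and $\check\Sigma=\check\Sigma_T$ is a sequence of estimators with $\|\check\Sigma-\Sigma\|_F=o_p(1)$ as $T\to\infty$. Then, with the signs chosen as in (i), $\|\bar\Sigma_k-\Sigma_k\|_F=o_p(1)$ for $k=1,2,3$.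
   Context: $\mathrm{vec}$ stacks columns and $\mathrm{vec}^{-1}$ is its inverse (reshaping a vector of length $m^2$ into an $m\times m$ matrix). Let $\mathcal R_1:\mathbb R^{d_1d_2d_3\times d_1d_2d_3}\to\mathbb R^{d_1^2\times d_2^2d_3^2}$ be the linear rearrangement with $\mathcal R_1(B\otimes A)=\mathrm{vec}(A)\mathrm{vec}(B)'$ for all $A\in\mathbb R^{d_1\times d_1}$, $B\in\mathbb R^{d_2d_3\times d_2d_3}$, and $\mathcal R_2:\mathbb R^{d_2d_3\times d_2d_3}\to\mathbb R^{d_2^2\times d_3^2}$ the linear rearrangement with $\mathcal R_2(C\otimes B)=\mathrm{vec}(B)\mathrm{vec}(C)'$ for $B\in\mathbb R^{d_2\times d_2}$, $C\in\mathbb R^{d_3\times d_3}$. Hierarchical SVD procedure: let $s_1,u_1,v_1$ be the largest singular value and corresponding unit left/right singular vectors of $S_1=\mathcal R_1(\check\Sigma)$; set $\bar\Sigma_1=\mathrm{vec}^{-1}(u_1)$. Let $\sigma_1,a_1,b_1$ be the largest singular value and unit left/right singular vectors of $S_2=\mathcal R_2(\mathrm{vec}^{-1}(s_1v_1))$; set $\bar\Sigma_2=\mathrm{vec}^{-1}(a_1)$ and $\bar\Sigma_3=\mathrm{vec}^{-1}(\sigma_1b_1)$. *)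

From HB Require Import structures.
From mathcomp Require Import all_boot all_order all_algebra.
From mathcomp Require Import all_classical all_reals all_analysis.
From mathcomp Require Import zify.

Set Implicit Arguments.
Unset Strict Implicit.
Unset Printing Implicit Defensive.

Import Order.TTheory GRing.Theory Num.Theory.
Local Open Scope ring_scope.
Local Open Scope classical_set_scope.

(* Index bookkeeping.  A pair (i, j) in 'I_m x 'I_n is stored at the   *)
(* position i + m * j of 'I_(m*n): this is the column-stacking (vec)   *)
(* convention, and also the Kronecker convention (B (x) A)             *)
(* [(i1 + m j1),(i2 + m j2)] = B j1 j2 * A i1 i2.                      *)

Lemma pidx_proof m n (i : 'I_m) (j : 'I_n) : (i + m * j < m * n)%N.
Proof. have := ltn_ord i; have := ltn_ord j; nia. Qed.

Definition pidx m n (i : 'I_m) (j : 'I_n) : 'I_(m * n) := Ordinal (pidx_proof i j).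

Lemma lo_proof m n (k : 'I_(m * n)) : (k %% m < m)%N.
Proof.
have hk := ltn_ord k; have m0 : (0 < m)%N by case: m k hk => //.
by rewrite ltn_pmod.
Qed.

Lemma hi_proof m n (k : 'I_(m * n)) : (k %/ m < n)%N.
Proof.
have hk := ltn_ord k; have m0 : (0 < m)%N by case: m k hk => //.
rewrite ltn_divLR //; move: hk; set K := nat_of_ord k; rewrite mulnC; exact.
Qed.

Definition lo m n (k : 'I_(m * n)) : 'I_m := Ordinal (lo_proof k).
Definition hi m n (k : 'I_(m * n)) : 'I_n := Ordinal (hi_proof k).

Section Defs.
Variable R : realType.

Definition vecm m n (A : 'M[R]_(m, n)) : 'cV[R]_(m * n) :=
  \col_k A (lo k) (hi k).

Definition unvec m n (v : 'cV[R]_(m * n)) : 'M[R]_(m, n) :=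
  \matrix_(i, j) v (pidx i j) 0.

Definition kron m n (B : 'M[R]_n) (A : 'M[R]_m) : 'M[R]_(m * n) :=
  \matrix_(k, l) (B (hi k) (hi l) * A (lo k) (lo l)).

(* The linear rearrangement R : R^{mn x mn} -> R^{m^2 x n^2} with
   R (B (x) A) = vec(A) vec(B)' ; explicitly
   R(M)[(i1 + m i2), (j1 + n j2)] = M[(i1 + m j1), (i2 + m j2)]. *)
Definition rearr m n (M : 'M[R]_(m * n)) : 'M[R]_(m * m, n * n) :=
  \matrix_(r, c) M (pidx (lo r) (lo c)) (pidx (hi r) (hi c)).

Definition sqnorm n (x : 'cV[R]_n) : R := \sum_i x i 0 ^+ 2.
Definition frob m n (A : 'M[R]_(m, n)) : R :=
  Num.sqrt (\sum_i \sum_j A i j ^+ 2).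

Definition unit_vec n (x : 'cV[R]_n) : Prop := sqnorm x = 1.

Definition symmetric n (A : 'M[R]_n) : Prop := A^T = A.
Definition psd n (A : 'M[R]_n) : Prop :=
  symmetric A /\ forall x : 'cV[R]_n, 0 <= (x^T *m A *m x) 0 0.
Definition pd n (A : 'M[R]_n) : Prop :=
  symmetric A /\ forall x : 'cV[R]_n, x != 0 -> 0 < (x^T *m A *m x) 0 0.

Definition singular_triple m n (S : 'M[R]_(m, n)) (s : R)
  (u : 'cV[R]_m) (v : 'cV[R]_n) : Prop :=
  [/\ 0 <= s, unit_vec u, unit_vec v, S *m v = s *: u & S^T *m u = s *: v].

Definition top_singular_triple m n (S : 'M[R]_(m, n)) (s : R)
  (u : 'cV[R]_m) (v : 'cV[R]_n) : Prop :=
  singular_triple S s u v /\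
  forall s' u' v', singular_triple S s' u' v' -> s' <= s.

(* The hierarchical SVD procedure (K = 3): given the chosen leading
   singular triples (s1,u1,v1) of S1 = R1(Sc) and (sig1,a1,b1) of
   S2 = R2(vec^{-1}(s1 v1)), the outputs are
   Sb1 = vec^{-1}(u1), Sb2 = vec^{-1}(a1), Sb3 = vec^{-1}(sig1 b1). *)
Definition hsvd_choice d1 d2 d3 (Sc : 'M[R]_(d1 * (d2 * d3)))
  (s1 : R) (u1 : 'cV[R]_(d1 * d1)) (v1 : 'cV[R]_((d2 * d3) * (d2 * d3)))
  (sig1 : R) (a1 : 'cV[R]_(d2 * d2)) (b1 : 'cV[R]_(d3 * d3)) : Prop :=
  top_singular_triple (rearr Sc) s1 u1 v1 /\
  top_singular_triple (rearr (unvec (s1 *: v1))) sig1 a1 b1.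

Definition hsvd1 d1 (u1 : 'cV[R]_(d1 * d1)) : 'M[R]_d1 := unvec u1.
Definition hsvd2 d2 (a1 : 'cV[R]_(d2 * d2)) : 'M[R]_d2 := unvec a1.
Definition hsvd3 d3 (sig1 : R) (b1 : 'cV[R]_(d3 * d3)) : 'M[R]_d3 :=
  unvec (sig1 *: b1).

End Defs.

(* Convergence in (outer) probability: X_T - c = o_p(1) in Frobenius norm.
   For every eps, delta > 0, eventually the event {||X_T - c||_F > eps}
   is contained in a measurable set of probability at most delta.
   (For measurable X_T this is the usual P(||X_T - c||_F > eps) -> 0.) *)
Definition conv_in_prob {R : realType} {d} {Omega : measurableType d}
  (P : probability Omega R) m n (X : nat -> Omega -> 'M[R]_(m, n))
  (c : 'M[R]_(m, n)) : Prop :=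
  forall eps delta : R, 0 < eps -> 0 < delta ->
    exists N : nat, forall T : nat, (N <= T)%N ->
      exists A : set Omega, [/\ measurable A, (P A <= delta%:E)%E &
        [set w | eps < frob (X T w - c)] `<=` A].

(* (i) Let (s, u, v) be a leading singular triple of R(X) with X psd, and
   take SVDs unvec u = sum_i a_i x_i y_i', unvec v = sum_j b_j p_j q_j'.
   The rearrangement identity <vec(x y'), R(X) vec(p q')> = <vec(x p'), X vec(y q')>
   and the positive semidefiniteness of X bound <u, R(X) v> by the average of
   the same form at the psd pairs (sum a x x', sum b p p') and
   (sum a y y', sum b q q'), which have unit norm; hence both are leading
   singular pairs. Applying this at both levels of the procedure gives (i).
   (ii) R(B (x) A) = vec(A) vec(B)' has rank one. For a leading singular triple
   (s, u, v) of x y' + E with |x| = 1 one gets |u - x|^2 <= 4 |E| / |y| and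
   |s v - y| <= 3 |E|, provided u and x have nonnegative entries at a common
   coordinate where x is large; for unvec u psd and Sigma_1 pd the diagonal
   provides it. Chaining the two levels makes the procedure continuous at
   Sigma_3 (x) Sigma_2 (x) Sigma_1, which transfers convergence in probability. *)

From HB Require Import structures.
From mathcomp Require Import all_boot all_order all_algebra.
From mathcomp Require Import all_classical all_reals all_analysis.
From mathcomp Require Import ring lra complex.

Set Implicit Arguments.
Unset Strict Implicit.
Unset Printing Implicit Defensive.
Import Order.TTheory GRing.Theory Num.Theory.
Local Open Scope ring_scope.

Lemma lo_pidx m n (i : 'I_m) (j : 'I_n) : lo (pidx i j) = i.
Proof. by apply: val_inj; rewrite /= addnC mulnC modnMDl modn_small. Qed.

Lemma hi_pidx m n (i : 'I_m) (j : 'I_n) : hi (pidx i j) = j.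
Proof.
have m_gt0 : (0 < m)%N by case: m i => [[]|].
by apply: val_inj; rewrite /= addnC mulnC divnMDl // divn_small // addn0.
Qed.

Lemma pidx_lohi m n (k : 'I_(m * n)) : pidx (lo k) (hi k) = k.
Proof. by apply: val_inj; rewrite /= addnC mulnC -divn_eq. Qed.

Lemma sum_pidx (V : nmodType) m n (F : 'I_(m * n) -> V) :
  \sum_k F k = \sum_(i < m) \sum_(j < n) F (pidx i j).
Proof.
rewrite pair_big (reindex (fun p : 'I_m * 'I_n => pidx p.1 p.2)) //=.
exists (fun k => (lo k, hi k)) => [[i j] _|k _] /=.
  by rewrite lo_pidx hi_pidx.
by rewrite pidx_lohi.
Qed.

(** * Euclidean structure on column vectors *)

Section EuclideanSpace.
Variable R : realType.
Implicit Types (n : nat) (a : R).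

Definition dot n (u v : 'cV[R]_n) : R := \sum_i u i 0 * v i 0.

Definition nrm n (u : 'cV[R]_n) : R := Num.sqrt (dot u u).

Lemma dotC n (u v : 'cV[R]_n) : dot u v = dot v u.
Proof. by apply: eq_bigr => i _; rewrite mulrC. Qed.

Lemma dotDl n (u v w : 'cV[R]_n) : dot (u + v) w = dot u w + dot v w.
Proof. by rewrite /dot -big_split; apply: eq_bigr => i _; rewrite mxE mulrDl. Qed.

Lemma dotZl n a (u v : 'cV[R]_n) : dot (a *: u) v = a * dot u v.
Proof. by rewrite /dot mulr_sumr; apply: eq_bigr => i _; rewrite mxE mulrA. Qed.

Lemma dotNl n (u v : 'cV[R]_n) : dot (- u) v = - dot u v.
Proof. by rewrite -scaleN1r dotZl mulN1r. Qed.

Lemma dotBl n (u v w : 'cV[R]_n) : dot (u - v) w = dot u w - dot v w.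
Proof. by rewrite dotDl dotNl. Qed.

Lemma dot0l n (u : 'cV[R]_n) : dot 0 u = 0.
Proof. by rewrite /dot big1 // => i _; rewrite mxE mul0r. Qed.

Lemma dotDr n (u v w : 'cV[R]_n) : dot w (u + v) = dot w u + dot w v.
Proof. by rewrite dotC dotDl !(dotC w). Qed.

Lemma dotZr n a (u v : 'cV[R]_n) : dot u (a *: v) = a * dot u v.
Proof. by rewrite dotC dotZl dotC. Qed.

Lemma dotNr n (u v : 'cV[R]_n) : dot u (- v) = - dot u v.
Proof. by rewrite dotC dotNl dotC. Qed.

Lemma dotBr n (u v w : 'cV[R]_n) : dot w (u - v) = dot w u - dot w v.
Proof. by rewrite dotDr dotNr. Qed.

Lemma dot0r n (u : 'cV[R]_n) : dot u 0 = 0.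
Proof. by rewrite dotC dot0l. Qed.

Lemma dot_suml n I (r : seq I) (P : pred I) (F : I -> 'cV[R]_n) v :
  dot (\sum_(i <- r | P i) F i) v = \sum_(i <- r | P i) dot (F i) v.
Proof. by elim/big_rec2: _ => [|i y1 y2 _ <-]; rewrite ?dot0l ?dotDl. Qed.

Lemma dot_sumr n I (r : seq I) (P : pred I) (F : I -> 'cV[R]_n) v :
  dot v (\sum_(i <- r | P i) F i) = \sum_(i <- r | P i) dot v (F i).
Proof. by rewrite dotC dot_suml; apply: eq_bigr => i _; rewrite dotC. Qed.

Lemma dot_trmx n (u v : 'cV[R]_n) : (u^T *m v) 0 0 = dot u v.
Proof. by rewrite mxE; apply: eq_bigr => i _; rewrite mxE. Qed.

Lemma dot_mulmx m n (u : 'cV[R]_m) (M : 'M[R]_(m, n)) (v : 'cV[R]_n) :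
  dot u (M *m v) = dot (M^T *m u) v.
Proof. by rewrite -!dot_trmx trmx_mul trmxK mulmxA. Qed.

Lemma dot_trmx_mul m n (u : 'cV[R]_m) (M : 'M[R]_(m, n)) (v : 'cV[R]_n) :
  (u^T *m M *m v) 0 0 = dot u (M *m v).
Proof. by rewrite -mulmxA dot_trmx. Qed.

Lemma dot_delta n (j : 'I_n) (y : 'cV[R]_n) : dot (delta_mx j 0) y = y j 0.
Proof.
rewrite /dot (bigD1 j) //= big1 => [|i /negPf ij]; rewrite !mxE ?eqxx ?ij ?mul0r //.
by rewrite mul1r addr0.
Qed.

Lemma mulmx_delta m n (A : 'M[R]_(m, n)) i j : (A *m delta_mx j (0 : 'I_1)) i 0 = A i j.
Proof. by rewrite -colE mxE. Qed.

Lemma outer_mulmx m n (w : 'cV[R]_m) (z v : 'cV[R]_n) :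
  w *m z^T *m v = dot z v *: w.
Proof.
rewrite -mulmxA; apply/matrixP => i j; rewrite (ord1 j) !mxE big_ord1.
by rewrite mulrC dot_trmx.
Qed.

Lemma sqnormE n (u : 'cV[R]_n) : sqnorm u = dot u u.
Proof. by apply: eq_bigr => i _; rewrite expr2. Qed.

Lemma sqr_coord_le n (w : 'cV[R]_n) k : w k 0 ^+ 2 <= dot w w.
Proof.
rewrite /dot (bigD1 k) //= -expr2 lerDl.
by apply: sumr_ge0 => i _; rewrite -expr2 sqr_ge0.
Qed.

Lemma dot_ge0 n (u : 'cV[R]_n) : 0 <= dot u u.
Proof. by apply: sumr_ge0 => i _; rewrite -expr2 sqr_ge0. Qed.

Lemma dot_eq0 n (u : 'cV[R]_n) : dot u u = 0 -> u = 0.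
Proof.
move=> u0; apply/matrixP => i j; rewrite (ord1 j) mxE.
by apply/eqP; rewrite -sqrf_eq0 eq_le sqr_ge0 -u0 sqr_coord_le.
Qed.

Lemma dim_gt0 n (u : 'cV[R]_n) : dot u u = 1 -> (0 < n)%N.
Proof. by case: n u => // u; rewrite /dot big_ord0 => /eqP; rewrite eq_sym oner_eq0. Qed.

Lemma sqr_dot_le n (u v : 'cV[R]_n) : dot u v ^+ 2 <= dot u u * dot v v.
Proof.
have [/dot_eq0 ->|uu0] := eqVneq (dot u u) 0; first by rewrite !dot0l expr0n mul0r.
have uu_gt0 : 0 < dot u u by rewrite lt_def uu0 dot_ge0.
(* 0 <= |(u.u) v - (u.v) u|^2 = (u.u) ((u.u) (v.v) - (u.v)^2) *)
have := dot_ge0 (dot u u *: v - dot u v *: u).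
rewrite !(dotBl, dotBr, dotZl, dotZr) (dotC v u) => h.
have : 0 <= dot u u * (dot u u * dot v v - dot u v ^+ 2) by move: h; congr (0 <= _); ring.
by rewrite pmulr_rge0 // subr_ge0.
Qed.

Lemma nrm_ge0 n (u : 'cV[R]_n) : 0 <= nrm u.
Proof. exact: sqrtr_ge0. Qed.

Lemma sqr_nrm n (u : 'cV[R]_n) : nrm u ^+ 2 = dot u u.
Proof. by rewrite sqr_sqrtr // dot_ge0. Qed.

Lemma nrm_unit n (u : 'cV[R]_n) : dot u u = 1 -> nrm u = 1.
Proof. by rewrite /nrm => ->; rewrite sqrtr1. Qed.

Lemma nrmZ n a (u : 'cV[R]_n) : nrm (a *: u) = `|a| * nrm u.
Proof. by rewrite /nrm dotZl dotZr mulrA -expr2 sqrtrM ?sqr_ge0 // sqrtr_sqr. Qed.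

Lemma normr_dot_le n (u v : 'cV[R]_n) : `|dot u v| <= nrm u * nrm v.
Proof.
rewrite -ler_sqr ?nnegrE ?mulr_ge0 ?nrm_ge0 //.
by rewrite real_normK ?num_real // exprMn !sqr_nrm sqr_dot_le.
Qed.

Lemma dot_le_nrm n (u v : 'cV[R]_n) : dot u v <= nrm u * nrm v.
Proof. exact: le_trans (ler_norm _) (normr_dot_le u v). Qed.

Lemma nrmD_le n (u v : 'cV[R]_n) : nrm (u + v) <= nrm u + nrm v.
Proof.
rewrite -ler_sqr ?nnegrE ?addr_ge0 ?nrm_ge0 //.
rewrite sqrrD !sqr_nrm !(dotDl, dotDr) (dotC v u).
have := dot_le_nrm u v; lra.
Qed.

End EuclideanSpace.

(** * Spectral theorem for real symmetric matrices *)

Section Spectral.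
Variable R : realType.
Local Notation C := (complex R).

Lemma symmetric_real_eigenvalue n (S : 'M[R]_n.+1) : S^T = S ->
  exists mu : R, eigenvalue S mu.
Proof.
move=> Ssym; pose Sc := map_mx (real_complex R) S.
have [lam] : exists lam : C, root (char_poly Sc) lam.
  by apply/closed_rootP; rewrite size_char_poly.
rewrite -eigenvalue_root_char => /eigenvalueP [z zS z_neq0].
pose zc := map_mx (@conjc R) z.
have Sc_real : map_mx (@conjc R) Sc = Sc.
  by apply/matrixP => i j; rewrite !mxE /= oppr0.
have Sc_sym : Sc^T = Sc by apply/matrixP => i j; rewrite !mxE -[in RHS]Ssym mxE.
have zcS : zc *m Sc = conjc lam *: zc.
  have := congr1 (map_mx (@conjc R)) zS; rewrite map_mxM Sc_real => ->.
  by apply/matrixP => i j; rewrite !mxE rmorphM.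
(* z Sc zc^T equals both lam N and (conj lam) N, with N = |z|^2 *)
pose N := (z *m zc^T) 0 0.
have N_neq0 : N != 0.
  apply: contraNneq z_neq0 => N0; apply/eqP/rowP => j; rewrite mxE.
  have : \sum_i z 0 i * conjc (z 0 i) = N.
    by rewrite /N mxE; apply: eq_bigr => i _; rewrite !mxE.
  rewrite N0 => /eqP; rewrite psumr_eq0 => [/allP/(_ j (mem_index_enum _))|i _].
    by rewrite implyTb mulf_eq0 conjc_eq0 orbb => /eqP.
  exact: mulcJ_ge0.
have lam_conj : conjc lam = lam.
  apply: (mulIf N_neq0); transitivity ((z *m Sc *m zc^T) 0 0).
    by rewrite -mulmxA -Sc_sym -trmx_mul zcS linearZ /= -scalemxAr mxE.
  by rewrite zS -scalemxAl mxE.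
have lamE : lam = real_complex R (complex.Re lam).
  by case: lam lam_conj {zS zcS} => a b /= [] b0; have -> : b = 0 by lra.
exists (complex.Re lam); rewrite eigenvalue_root_char.
rewrite -(fmorph_root (real_complex R)) map_char_poly.
rewrite [X in root _ X](_ : _ = lam); last exact: esym lamE.
by rewrite -eigenvalue_root_char; apply/eigenvalueP; exists z.
Qed.

Lemma symmetric_unit_eigenvector n (S : 'M[R]_n.+1) : S^T = S ->
  exists mu (y : 'cV[R]_n.+1), dot y y = 1 /\ S *m y = mu *: y.
Proof.
move=> Ssym; have [mu /eigenvalueP [w wS w_neq0]] := symmetric_real_eigenvalue Ssym.
pose y := w^T; have yS : S *m y = mu *: y by rewrite -Ssym -trmx_mul wS linearZ.
have yy_gt0 : 0 < dot y y.
  rewrite lt_def dot_ge0 andbT; apply: contra w_neq0 => /eqP/dot_eq0 y0.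
  by rewrite -[w]trmxK -/y y0 trmx0.
exists mu, ((nrm y)^-1 *: y); split.
  by rewrite dotZl dotZr mulrA -expr2 exprVn sqr_nrm mulVf ?gt_eqF.
by rewrite -scalemxAr yS !scalerA mulrC.
Qed.

Lemma householder_reflection n (y : 'cV[R]_n.+1) : dot y y = 1 ->
  exists H : 'M[R]_n.+1, [/\ H^T = H, H *m H = 1%:M & H *m delta_mx 0 0 = y].
Proof.
move=> yy; pose e0 : 'cV[R]_n.+1 := delta_mx 0 0; pose w := e0 - y.
have e0e0 : dot e0 e0 = 1 by rewrite dot_delta mxE.
have [/dot_eq0/subr0_eq <-|ww_neq0] := eqVneq (dot w w) 0.
  by exists 1%:M; split; rewrite ?trmx1 ?mul1mx.
have ww : dot w w = 2 * (1 - y 0 0).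
  by rewrite !(dotBl, dotBr) e0e0 yy (dotC y) dot_delta; ring.
have we0 : dot w e0 = 1 - y 0 0 by rewrite dotBl e0e0 dotC dot_delta.
have y00_neq1 : 1 - y 0 0 != 0 by apply: contraNneq ww_neq0 => y00; rewrite ww y00 mulr0.
pose c := 2 / dot w w.
exists (1%:M - c *: (w *m w^T)); split.
- by rewrite linearB /= trmx1 linearZ /= trmx_mul trmxK.
- have ww2 : w *m w^T *m (w *m w^T) = dot w w *: (w *m w^T).
    by rewrite mulmxA outer_mulmx scalemxAl.
  rewrite mulmxBl mul1mx mulmxBr mulmx1 -scalemxAl -scalemxAr ww2 !scalerA.
  have -> : c * c * dot w w = c + c by rewrite /c; field.
  by rewrite scalerDl opprB addrK subrK.
- rewrite mulmxBl mul1mx -scalemxAl outer_mulmx scalerA.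
  have -> : c * dot w e0 = 1 by rewrite /c we0 ww; field.
  by rewrite scale1r opprB addrC subrK.
Qed.

Lemma symmetric_eigen_block n (T : 'M[R]_(1 + n)) mu : T^T = T ->
  T *m delta_mx 0 (0 : 'I_1) = mu *: delta_mx 0 0 ->
  T = block_mx mu%:M 0 0 (drsubmx T).
Proof.
move=> Tsym Te.
have Tcol i : T i 0 = mu * (i == 0)%:R.
  by rewrite -(mulmx_delta T) Te !mxE andbT.
have Trow j : T 0 j = mu * (j == 0)%:R by rewrite -Tsym mxE Tcol.
have l0 : lshift n (0 : 'I_1) = 0 by apply: val_inj.
rewrite -[T in LHS]submxK; congr block_mx; apply/matrixP => i j.
- by rewrite (ord1 i) (ord1 j) !mxE l0 Tcol eqxx mulr1 mulr1n.
- by rewrite (ord1 i) !mxE l0 Trow mulr0.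
- by rewrite (ord1 j) !mxE l0 Tcol mulr0.
Qed.

(* Induction on the size, splitting off an eigenvector with a Householder
   reflection. *)
Lemma symmetric_orthodiag n (S : 'M[R]_n) : S^T = S ->
  exists (Y : 'M[R]_n) (d : 'rV[R]_n), Y^T *m Y = 1%:M /\ S *m Y = Y *m diag_mx d.
Proof.
elim: n S => [|n IH] S Ssym.
  by exists 1%:M, 0; split; [rewrite trmx1 mulmx1 | apply/matrixP => -[]].
have [mu [y [yy yS]]] := symmetric_unit_eigenvector Ssym.
have [H [Hsym HH He]] := householder_reflection yy.
pose T : 'M[R]_(1 + n) := H *m S *m H.
have Tsym : T^T = T by rewrite /T !trmx_mul Hsym Ssym mulmxA.
have Te : T *m delta_mx 0 (0 : 'I_1) = mu *: delta_mx 0 0.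
  by rewrite /T -!mulmxA He yS -scalemxAr -He mulmxA HH mul1mx.
have SH : S *m H = H *m T by rewrite /T !mulmxA HH mul1mx.
have TE := symmetric_eigen_block Tsym Te.
have [Y [d [YY TY]]] := IH (drsubmx T) ltac:(by rewrite trmx_drsub Tsym).
pose B : 'M[R]_(1 + n) := block_mx 1%:M 0 0 Y.
exists (H *m B), (row_mx (mu%:M : 'rV[R]_1) d); split.
  rewrite trmx_mul mulmxA -(mulmxA B^T) Hsym HH mulmx1 /B tr_block_mx.
  rewrite (@mulmx_block _ 1 n 1 n 1 n) !trmx0 trmx1 !mulmx0 !mul0mx !mulmx1 YY.
  by rewrite !addr0 !add0r -scalar_mx_block.
rewrite mulmxA SH -mulmxA -[H *m B *m _]mulmxA; congr (H *m _).
change (T *m B = B *m @diag_mx R (1 + n) (row_mx (mu%:M : 'rV[R]_1) d)).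
rewrite TE diag_mx_row /B !(@mulmx_block _ 1 n 1 n 1 n).
rewrite !mulmx0 !mul0mx !mulmx1 !mul1mx !addr0 !add0r TY; congr block_mx.
by apply/matrixP => i j; rewrite (ord1 i) (ord1 j) !mxE /= mulr1n.
Qed.

Lemma symmetric_eigenbasis n (S : 'M[R]_n) : S^T = S ->
  exists (d : 'I_n -> R) (y : 'I_n -> 'cV[R]_n),
    [/\ forall i j, dot (y i) (y j) = (i == j)%:R,
        forall i, S *m y i = d i *: y i &
        forall v, v = \sum_i dot (y i) v *: y i].
Proof.
move=> Ssym; have [Y [d [YY SY]]] := symmetric_orthodiag Ssym.
have YYt : Y *m Y^T = 1%:M by apply: mulmx1C.
exists (fun i => d 0 i), (fun i => col i Y); split.
- move=> i j; have := congr1 (fun M : 'M[R]_n => M i j) YY.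
  by rewrite !mxE => <-; apply: eq_bigr => k _; rewrite !mxE.
- move=> i; apply/colP => a; transitivity ((S *m Y) a i).
    by rewrite !mxE; apply: eq_bigr => k _; rewrite !mxE.
  by rewrite SY mul_mx_diag !mxE mulrC.
- move=> v; apply/colP => a.
  rewrite -{1}[v]mul1mx -YYt -mulmxA !mxE summxE; apply: eq_bigr => i _.
  by rewrite !mxE mulrC -dot_trmx mxE; congr (_ * _); apply: eq_bigr => k _; rewrite !mxE.
Qed.

End Spectral.

(** * Leading singular triples *)

Section TopSingularTriple.
Variable R : realType.
Implicit Types (p q : nat) (s : R).

Definition bilinear_bound p q (M : 'M[R]_(p, q)) s :=
  forall u v, dot u (M *m v) <= s * nrm u * nrm v.

Lemma dot_expansion n (y : 'I_n -> 'cV[R]_n) :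
  (forall v, v = \sum_i dot (y i) v *: y i) ->
  forall v w, dot v w = \sum_i dot (y i) v * dot (y i) w.
Proof.
move=> y_basis v w; rewrite {1}(y_basis v) dot_suml.
by apply: eq_bigr => i _; rewrite dotZl dotC.
Qed.

Lemma bilinear_bound_nrm p q (M : 'M[R]_(p, q)) s v :
  0 <= s -> bilinear_bound M s -> nrm (M *m v) <= s * nrm v.
Proof.
move=> s_ge0 Mb; have [->|Mv_neq0] := eqVneq (nrm (M *m v)) 0.
  by rewrite mulr_ge0 ?nrm_ge0.
have Mv_gt0 : 0 < nrm (M *m v) by rewrite lt_def Mv_neq0 nrm_ge0.
by rewrite -(ler_pM2r Mv_gt0) -expr2 sqr_nrm mulrAC Mb.
Qed.

Lemma bilinear_bound_tr p q (M : 'M[R]_(p, q)) s :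
  bilinear_bound M s -> bilinear_bound M^T s.
Proof. by move=> Mb u v; rewrite dot_mulmx trmxK dotC mulrAC; apply: Mb. Qed.

(* the equality case of the Cauchy-Schwarz inequality *)
Lemma dot_eq_nrm_scale n (z w : 'cV[R]_n) s :
  nrm w <= s -> dot z z = 1 -> dot z w = s -> w = s *: z.
Proof.
move=> ws zz zw; apply/eqP; rewrite -subr_eq0; apply/eqP/dot_eq0.
have -> : dot (w - s *: z) (w - s *: z) = nrm w ^+ 2 - s ^+ 2.
  by rewrite !(dotBl, dotBr, dotZl, dotZr) zz (dotC w) zw sqr_nrm; ring.
apply/eqP; rewrite subr_eq0 eq_le ler_sqr ?nnegrE ?(le_trans (nrm_ge0 w)) // ws /=.
by rewrite sqr_nrm -zw (le_trans (sqr_dot_le z w)) // zz mul1r.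
Qed.

Lemma singular_triple_dot p q (M : 'M[R]_(p, q)) s u v :
  singular_triple M s u v -> dot u (M *m v) = s.
Proof. by case=> _ uu _ -> _; rewrite dotZr -sqnormE uu mulr1. Qed.

Lemma top_singular_tripleP p q (M : 'M[R]_(p, q)) s u v :
  0 <= s -> bilinear_bound M s -> dot u u = 1 -> dot v v = 1 ->
  dot u (M *m v) = s -> top_singular_triple M s u v.
Proof.
move=> s_ge0 Mb uu vv uMv.
have MTb := bilinear_bound_tr Mb.
split; first split; rewrite /unit_vec ?sqnormE //.
- apply: dot_eq_nrm_scale => //.
  by rewrite (le_trans (bilinear_bound_nrm _ s_ge0 Mb)) // nrm_unit ?mulr1.
- apply: dot_eq_nrm_scale => //; last by rewrite dot_mulmx trmxK dotC.
  by rewrite (le_trans (bilinear_bound_nrm _ s_ge0 MTb)) // nrm_unit ?mulr1.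
- move=> s' u' v' [s'_ge0 u'u' v'v' Mv' _]; rewrite /unit_vec !sqnormE in u'u' v'v'.
  have <- : dot u' (M *m v') = s' by rewrite Mv' dotZr u'u' mulr1.
  by rewrite (le_trans (Mb _ _)) // !nrm_unit // !mulr1.
Qed.

(* The largest eigenvalue of M^T M bounds |M v|^2 and is attained. *)
Lemma bilinear_bound_attained p q (M : 'M[R]_(p, q)) : (0 < q)%N ->
  exists s, [/\ 0 <= s, bilinear_bound M s &
    exists v, dot v v = 1 /\ dot (M *m v) (M *m v) = s ^+ 2].
Proof.
case: q M => // q M _.
have MM_sym : (M^T *m M)^T = M^T *m M by rewrite trmx_mul trmxK.
have [d [y [y_orth yS y_basis]]] := symmetric_eigenbasis MM_sym.
have dE i : d i = dot (M *m y i) (M *m y i).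
  by rewrite dot_mulmx mulmxA yS dotZl y_orth eqxx mulr1.
have [imax _ d_max] := @arg_maxP _ R _ ord0 predT d isT.
set lam := d imax in d_max *.
have lam_ge0 : 0 <= lam by rewrite /lam dE dot_ge0.
have Mv_le v : dot (M *m v) (M *m v) <= lam * dot v v.
  rewrite dot_mulmx mulmxA {1}(y_basis v) mulmx_sumr dot_suml.
  rewrite (dot_expansion y_basis v v) mulr_sumr; apply: ler_sum => i _.
  rewrite -scalemxAr yS scalerA dotZl.
  have d_le : d i <= lam := d_max i isT.
  have := sqr_ge0 (dot (y i) v); nra.
exists (Num.sqrt lam); split; first exact: sqrtr_ge0.
- move=> u v; apply: le_trans (dot_le_nrm u (M *m v)) _.
  have : nrm (M *m v) <= Num.sqrt lam * nrm v.
    rewrite -ler_sqr ?nnegrE ?mulr_ge0 ?sqrtr_ge0 ?nrm_ge0 //.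
    by rewrite exprMn !sqr_nrm sqr_sqrtr // Mv_le.
  have := nrm_ge0 u; have := nrm_ge0 (M *m v); nra.
- by exists (y imax); rewrite y_orth eqxx sqr_sqrtr // -dE.
Qed.

Lemma exists_top_singular_triple p q (M : 'M[R]_(p, q)) : (0 < p)%N -> (0 < q)%N ->
  exists s u v, top_singular_triple M s u v /\ bilinear_bound M s.
Proof.
case: p M => // p M _ q_gt0.
have [s [s_ge0 Mb [v [vv Mvv]]]] := bilinear_bound_attained M q_gt0.
exists s; have [s0|s_neq0] := eqVneq s 0.
- exists (delta_mx 0 0), v; split=> //; apply: top_singular_tripleP => //.
    by rewrite dot_delta mxE.
  have /dot_eq0 -> : dot (M *m v) (M *m v) = 0 by rewrite Mvv s0 expr2 mulr0.
  by rewrite dot0r s0.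
- exists (s^-1 *: (M *m v)), v; split=> //; apply: top_singular_tripleP => //.
    by rewrite dotZl dotZr Mvv mulrA -expr2 exprVn mulVf // expf_neq0.
  by rewrite dotZl Mvv expr2 mulrA mulVf // mul1r.
Qed.

Lemma top_singular_bound p q (M : 'M[R]_(p, q)) s u v :
  top_singular_triple M s u v -> bilinear_bound M s.
Proof.
move=> [Msuv s_max]; have [_ uu vv _ _] := Msuv.
rewrite /unit_vec !sqnormE in uu vv.
have [s' [u' [v' [[Ms'u'v' s'_max] Mb]]]] :=
  exists_top_singular_triple M (dim_gt0 uu) (dim_gt0 vv).
by have -> : s = s' by apply/le_anti; rewrite (s'_max _ _ _ Msuv) (s_max _ _ _ Ms'u'v').
Qed.

End TopSingularTriple.

(** * Reshaping and rearrangement *)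

Lemma vecm_is_linear (R : realType) m n : linear (@vecm R m n).
Proof. by move=> a A B; apply/matrixP => k l; rewrite !mxE. Qed.
HB.instance Definition _ (R : realType) m n := GRing.isLinear.Build R 'M[R]_(m, n)
  'cV[R]_(m * n) _ (@vecm R m n) (@vecm_is_linear R m n).

Lemma unvec_is_linear (R : realType) m n : linear (@unvec R m n).
Proof. by move=> a A B; apply/matrixP => k l; rewrite !mxE. Qed.
HB.instance Definition _ (R : realType) m n := GRing.isLinear.Build R 'cV[R]_(m * n)
  'M[R]_(m, n) _ (@unvec R m n) (@unvec_is_linear R m n).

Lemma rearr_is_linear (R : realType) m n : linear (@rearr R m n).
Proof. by move=> a A B; apply/matrixP => k l; rewrite !mxE. Qed.
HB.instance Definition _ (R : realType) m n := GRing.isLinear.Build R 'M[R]_(m * n)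
  'M[R]_(m * m, n * n) _ (@rearr R m n) (@rearr_is_linear R m n).

Section Reshape.
Variable R : realType.

Lemma vecmE m n (A : 'M[R]_(m, n)) i j : vecm A (pidx i j) 0 = A i j.
Proof. by rewrite mxE lo_pidx hi_pidx. Qed.

Lemma unvecK m n : cancel (@unvec R m n) (@vecm R m n).
Proof. by move=> u; apply/colP => k; rewrite !mxE pidx_lohi. Qed.

Lemma vecmK m n : cancel (@vecm R m n) (@unvec R m n).
Proof. by move=> A; apply/matrixP => i j; rewrite mxE vecmE. Qed.

Lemma vecm_outerE m n (x : 'cV[R]_m) (y : 'cV[R]_n) k :
  vecm (x *m y^T) k 0 = x (lo k) 0 * y (hi k) 0.
Proof. by rewrite !mxE big_ord1 !mxE. Qed.

Lemma dot_vecm m n (A B : 'M[R]_(m, n)) :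
  dot (vecm A) (vecm B) = \sum_i \sum_j A i j * B i j.
Proof.
by rewrite /dot sum_pidx; apply: eq_bigr => i _; apply: eq_bigr => j _; rewrite !vecmE.
Qed.

Lemma dot_vecm_outer m n (x p : 'cV[R]_m) (y q : 'cV[R]_n) :
  dot (vecm (x *m y^T)) (vecm (p *m q^T)) = dot x p * dot y q.
Proof.
rewrite dot_vecm /dot mulr_suml; apply: eq_bigr => i _.
by rewrite mulr_sumr; apply: eq_bigr => j _; rewrite !mxE !big_ord1 !mxE; ring.
Qed.

Lemma frob_vecm m n (A : 'M[R]_(m, n)) : frob A = nrm (vecm A).
Proof.
by rewrite /nrm dot_vecm; congr Num.sqrt; do 2!(apply: eq_bigr => ? _); rewrite expr2.
Qed.

Lemma frob_ge0 m n (A : 'M[R]_(m, n)) : 0 <= frob A.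
Proof. exact: sqrtr_ge0. Qed.

Lemma frob_trmx m n (A : 'M[R]_(m, n)) : frob A^T = frob A.
Proof.
by rewrite /frob exchange_big; congr Num.sqrt; do 2!(apply: eq_bigr => ? _); rewrite mxE.
Qed.

Lemma frob_rearr m n (X : 'M[R]_(m * n)) : frob (rearr X) = frob X.
Proof.
rewrite /frob sum_pidx [in RHS]sum_pidx; congr Num.sqrt.
transitivity (\sum_(i1 < m) \sum_(i2 < m) \sum_(j1 < n) \sum_(j2 < n)
   X (pidx i1 j1) (pidx i2 j2) ^+ 2).
  apply: eq_bigr => i1 _; apply: eq_bigr => i2 _; rewrite sum_pidx.
  by apply: eq_bigr => j1 _; apply: eq_bigr => j2 _; rewrite mxE !lo_pidx !hi_pidx.
apply: eq_bigr => i1 _; rewrite exchange_big; apply: eq_bigr => j1 _.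
by rewrite sum_pidx.
Qed.

Lemma rearr_kron m n (B : 'M[R]_n) (A : 'M[R]_m) :
  rearr (kron B A) = vecm A *m (vecm B)^T.
Proof. by apply/matrixP => r c; rewrite !mxE big_ord1 !mxE !lo_pidx !hi_pidx mulrC. Qed.

Lemma nrm_mulmx_le m n (E : 'M[R]_(m, n)) (v : 'cV[R]_n) :
  nrm (E *m v) <= frob E * nrm v.
Proof.
rewrite -ler_sqr ?nnegrE ?mulr_ge0 ?frob_ge0 ?nrm_ge0 //.
rewrite exprMn !sqr_nrm /frob sqr_sqrtr; last by do 2!(apply: sumr_ge0 => ? _); rewrite sqr_ge0.
rewrite /dot mulr_suml; apply: ler_sum => i _; rewrite -expr2.
have -> : (E *m v) i 0 = dot (row i E)^T v.
  by rewrite mxE; apply: eq_bigr => k _; rewrite !mxE.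
apply: le_trans (sqr_dot_le _ _) _; apply: ler_wpM2r; first exact: dot_ge0.
by apply: ler_sum => j _; rewrite !mxE expr2.
Qed.

Lemma normr_bil_le m n (E : 'M[R]_(m, n)) u v :
  `|dot u (E *m v)| <= frob E * nrm u * nrm v.
Proof.
apply: le_trans (normr_dot_le _ _) _; rewrite [frob E * _]mulrC -mulrA.
by apply: ler_wpM2l; [exact: nrm_ge0 | exact: nrm_mulmx_le].
Qed.

Lemma dot_rearr_outer m n (X : 'M[R]_(m * n)) (x y : 'cV[R]_m) (p q : 'cV[R]_n) :
  dot (vecm (x *m y^T)) (rearr X *m vecm (p *m q^T)) =
  dot (vecm (x *m p^T)) (X *m vecm (y *m q^T)).
Proof.
rewrite /dot sum_pidx [RHS]sum_pidx.
transitivity (\sum_(i1 < m) \sum_(i2 < m) \sum_(j1 < n) \sum_(j2 < n)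
   x i1 0 * y i2 0 * (X (pidx i1 j1) (pidx i2 j2) * (p j1 0 * q j2 0))).
  apply: eq_bigr => i1 _; apply: eq_bigr => i2 _.
  rewrite vecm_outerE mxE sum_pidx mulr_sumr; apply: eq_bigr => j1 _.
  rewrite mulr_sumr; apply: eq_bigr => j2 _.
  by rewrite vecm_outerE mxE !lo_pidx !hi_pidx.
apply: eq_bigr => i1 _; rewrite exchange_big; apply: eq_bigr => j1 _.
rewrite vecm_outerE mxE mulr_sumr sum_pidx; apply: eq_bigr => i2 _.
apply: eq_bigr => j2 _.
by rewrite vecm_outerE !lo_pidx !hi_pidx; ring.
Qed.

End Reshape.

(** * Positive semidefinite leading singular vectors *)

Section PsdSingularVectors.
Variable R : realType.

Lemma psd_dot_le_avg n (X : 'M[R]_n) u v : psd X ->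
  dot u (X *m v) <= (dot u (X *m u) + dot v (X *m v)) / 2.
Proof.
move=> [Xsym Xpsd]; have := Xpsd (u - v); rewrite dot_trmx_mul mulmxBr !(dotBl, dotBr).
have -> : dot v (X *m u) = dot u (X *m v) by rewrite dot_mulmx Xsym dotC.
lra.
Qed.

Lemma psd_sum_outer m d (c : 'I_d -> R) (x : 'I_d -> 'cV[R]_m) :
  (forall i, 0 <= c i) -> psd (\sum_i c i *: (x i *m (x i)^T)).
Proof.
move=> c_ge0; split.
  red; apply/matrixP => a b; rewrite mxE !summxE; apply: eq_bigr => i _.
  by rewrite !mxE !big_ord1 !mxE [x i b _ * _]mulrC.
move=> z; rewrite dot_trmx_mul mulmx_suml dot_sumr; apply: sumr_ge0 => i _.
by rewrite -scalemxAl dotZr outer_mulmx dotZr dotC -expr2 mulr_ge0 ?sqr_ge0.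
Qed.

Lemma psdZ n a (A : 'M[R]_n) : 0 <= a -> psd A -> psd (a *: A).
Proof.
move=> a_ge0 [Asym Apsd]; split; first by red; rewrite linearZ /= Asym.
by move=> z; rewrite -scalemxAr -scalemxAl mxE mulr_ge0.
Qed.

(* [sg i * |x i|^2 = sg i]: the left singular vectors with a nonzero
   singular value are unit vectors. *)
Lemma svd_decomposition d (A : 'M[R]_d) :
  exists (sg : 'I_d -> R) (x y : 'I_d -> 'cV[R]_d),
  [/\ forall i, 0 <= sg i, forall i j, dot (y i) (y j) = (i == j)%:R,
      forall i j, i != j -> dot (x i) (x j) = 0,
      forall i, sg i * dot (x i) (x i) = sg i &
      A = \sum_i sg i *: (x i *m (y i)^T)].
Proof.
have AA_sym : (A^T *m A)^T = A^T *m A by rewrite trmx_mul trmxK.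
have [d2 [y [y_orth yS y_basis]]] := symmetric_eigenbasis AA_sym.
have AyE i j : dot (A *m y i) (A *m y j) = d2 i * (i == j)%:R.
  by rewrite dot_mulmx mulmxA yS dotZl y_orth.
have d2_ge0 i : 0 <= d2 i by have := dot_ge0 (A *m y i); rewrite AyE eqxx mulr1.
pose sg i := Num.sqrt (d2 i); pose x i := (sg i)^-1 *: (A *m y i).
have Ay i : sg i *: x i = A *m y i.
  have [sg0|sg_neq0] := eqVneq (sg i) 0; last by rewrite scalerA mulfV // scale1r.
  have /dot_eq0 -> : dot (A *m y i) (A *m y i) = 0.
    by move/eqP: sg0; rewrite sqrtr_eq0 AyE eqxx mulr1 => d0; apply/le_anti/andP.
  by rewrite sg0 scale0r.
exists sg, x, y; split => //.
- by move=> i; apply: sqrtr_ge0.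
- by move=> i j ij; rewrite dotZl dotZr AyE (negPf ij) !mulr0.
- move=> i; rewrite dotZl dotZr AyE eqxx mulr1.
  have [->|sg_neq0] := eqVneq (sg i) 0; first by rewrite mul0r.
  by rewrite -[d2 i]sqr_sqrtr // -/(sg i); field.
- apply/matrixP => a b; rewrite -[A a b](mulmx_delta A) (y_basis (delta_mx b 0)).
  rewrite mulmx_sumr !summxE; apply: eq_bigr => i _.
  rewrite -scalemxAr (scalemxAl (sg i)) Ay !mxE big_ord1 !mxE.
  by rewrite dotC dot_delta mulrC.
Qed.

Lemma dot_vecm_sum_outer m n d (c : 'I_d -> R) (x : 'I_d -> 'cV[R]_m)
    (y : 'I_d -> 'cV[R]_n) :
  (forall i j, i != j -> dot (x i) (x j) * dot (y i) (y j) = 0) ->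
  dot (vecm (\sum_i c i *: (x i *m (y i)^T))) (vecm (\sum_i c i *: (x i *m (y i)^T)))
  = \sum_i c i ^+ 2 * (dot (x i) (x i) * dot (y i) (y i)).
Proof.
move=> xy_orth; rewrite linear_sum dot_suml; apply: eq_bigr => i _.
rewrite dot_sumr (bigD1 i) //= big1 => [|j ji].
  by rewrite addr0 linearZ dotZl dotZr dot_vecm_outer mulrA -expr2.
by rewrite !linearZ dotZl dotZr dot_vecm_outer xy_orth 1?eq_sym ?mulr0.
Qed.

Lemma svd_psd_parts d (A : 'M[R]_d) :
  exists (sg : 'I_d -> R) (x y : 'I_d -> 'cV[R]_d),
  [/\ forall i, 0 <= sg i, A = \sum_i sg i *: (x i *m (y i)^T),
      dot (vecm (\sum_i sg i *: (x i *m (x i)^T)))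
          (vecm (\sum_i sg i *: (x i *m (x i)^T))) = dot (vecm A) (vecm A) &
      dot (vecm (\sum_i sg i *: (y i *m (y i)^T)))
          (vecm (\sum_i sg i *: (y i *m (y i)^T))) = dot (vecm A) (vecm A)].
Proof.
have [sg [x [y [sg_ge0 y_orth x_orth x_unit AE]]]] := svd_decomposition A.
have AA : dot (vecm A) (vecm A) = \sum_i sg i ^+ 2 * dot (x i) (x i).
  rewrite AE dot_vecm_sum_outer => [|i j ij]; last by rewrite y_orth (negPf ij) mulr0.
  by apply: eq_bigr => i _; rewrite y_orth eqxx mulr1.
exists sg, x, y; split => //.
- rewrite AA dot_vecm_sum_outer => [|i j ij]; last by rewrite x_orth ?mul0r.
  apply: eq_bigr => i _; have x_i := x_unit i.
  transitivity ((sg i * dot (x i) (x i)) ^+ 2); first by ring.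
  by rewrite x_i expr2 -mulrA x_i.
- rewrite AA dot_vecm_sum_outer => [|i j ij]; last by rewrite y_orth (negPf ij) mulr0.
  by apply: eq_bigr => i _; rewrite y_orth eqxx !mulr1 expr2 -mulrA x_unit.
Qed.

Lemma dot_rearr_sum_outer m n d1 d2 (X : 'M[R]_(m * n))
    (c : 'I_d1 -> R) (x y : 'I_d1 -> 'cV[R]_m)
    (e : 'I_d2 -> R) (p q : 'I_d2 -> 'cV[R]_n) :
  dot (vecm (\sum_i c i *: (x i *m (y i)^T)))
      (rearr X *m vecm (\sum_j e j *: (p j *m (q j)^T))) =
  \sum_i \sum_j c i * e j *
    dot (vecm (x i *m (p j)^T)) (X *m vecm (y i *m (q j)^T)).
Proof.
rewrite linear_sum dot_suml; apply: eq_bigr => i _.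
rewrite linear_sum mulmx_sumr dot_sumr; apply: eq_bigr => j _.
by rewrite !linearZ dotZl dotZr dot_rearr_outer mulrA.
Qed.

Lemma rearr_psd_dot_le m n d1 d2 (X : 'M[R]_(m * n))
    (c : 'I_d1 -> R) (x y : 'I_d1 -> 'cV[R]_m)
    (e : 'I_d2 -> R) (p q : 'I_d2 -> 'cV[R]_n) :
  psd X -> (forall i, 0 <= c i) -> (forall j, 0 <= e j) ->
  dot (vecm (\sum_i c i *: (x i *m (y i)^T)))
      (rearr X *m vecm (\sum_j e j *: (p j *m (q j)^T))) <=
  (dot (vecm (\sum_i c i *: (x i *m (x i)^T)))
       (rearr X *m vecm (\sum_j e j *: (p j *m (p j)^T))) +
   dot (vecm (\sum_i c i *: (y i *m (y i)^T)))
       (rearr X *m vecm (\sum_j e j *: (q j *m (q j)^T)))) / 2.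
Proof.
move=> Xpsd c_ge0 e_ge0; rewrite !dot_rearr_sum_outer.
rewrite -big_split /= mulr_suml; apply: ler_sum => i _.
rewrite -big_split /= mulr_suml; apply: ler_sum => j _.
rewrite -mulrDr -(mulrA (c i * e j)); apply: ler_wpM2l; first by rewrite mulr_ge0.
exact: psd_dot_le_avg.
Qed.

Lemma psd_top_singular_triple m n (X : 'M[R]_(m * n)) :
  (0 < m)%N -> (0 < n)%N -> psd X ->
  exists s u v, [/\ top_singular_triple (rearr X) s u v, psd (unvec u) & psd (unvec v)].
Proof.
move=> m_gt0 n_gt0 Xpsd.
have [s [u [v [top Xb]]]] :=
  exists_top_singular_triple (rearr X) (ltn_mul m_gt0 m_gt0) (ltn_mul n_gt0 n_gt0).
have [[s_ge0 uu vv _ _] _] := top; rewrite /unit_vec !sqnormE in uu vv.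
have uXv := singular_triple_dot top.1.
have [a [x [y [a_ge0 uE xx yy]]]] := svd_psd_parts (unvec u).
have [b [p [q [b_ge0 vE pp qq]]]] := svd_psd_parts (unvec v).
rewrite unvecK uu in xx yy; rewrite unvecK vv in pp qq.
set P := \sum_i a i *: _ in xx; set Q := \sum_i a i *: _ in yy.
set P' := \sum_i b i *: _ in pp; set Q' := \sum_i b i *: _ in qq.
have sP : dot (vecm P) (rearr X *m vecm P') <= s.
  by rewrite (le_trans (Xb _ _)) // !nrm_unit // !mulr1.
have sQ : dot (vecm Q) (rearr X *m vecm Q') <= s.
  by rewrite (le_trans (Xb _ _)) // !nrm_unit // !mulr1.
have := @rearr_psd_dot_le _ _ _ _ X a x y b p q Xpsd a_ge0 b_ge0.
rewrite -/P -/Q -/P' -/Q' -uE -vE !unvecK uXv => s_le.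
exists s, (vecm P), (vecm P'); rewrite !vecmK; split.
- by apply: top_singular_tripleP => //; lra.
- exact: psd_sum_outer.
- exact: psd_sum_outer.
Qed.

Lemma hsvd_psd_choice d1 d2 d3 (Sc : 'M[R]_(d1 * (d2 * d3))) :
  (0 < d1)%N -> (0 < d2)%N -> (0 < d3)%N -> psd Sc ->
  exists s1 u1 v1 sig1 a1 b1,
    [/\ hsvd_choice Sc s1 u1 v1 sig1 a1 b1,
        psd (hsvd1 u1), psd (hsvd2 a1) & psd (hsvd3 sig1 b1)].
Proof.
move=> d1_gt0 d2_gt0 d3_gt0 Sc_psd.
have [s1 [u1 [v1 [top1 u1_psd v1_psd]]]] :=
  psd_top_singular_triple d1_gt0 (ltn_mul d2_gt0 d3_gt0) Sc_psd.
have [[s1_ge0 _ _ _ _] _] := top1.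
have S2_psd : psd (unvec (s1 *: v1)) by rewrite linearZ; apply: psdZ.
have [sig1 [a1 [b1 [top2 a1_psd b1_psd]]]] := psd_top_singular_triple d2_gt0 d3_gt0 S2_psd.
have [[sig1_ge0 _ _ _ _] _] := top2.
exists s1, u1, v1, sig1, a1, b1; split => //.
by rewrite /hsvd3 linearZ; apply: psdZ.
Qed.

End PsdSingularVectors.

(** * Perturbation of a rank-one matrix *)

Section RankOnePerturbation.
Variable R : realType.
Variables (p q : nat) (x : 'cV[R]_p) (y : 'cV[R]_q) (E : 'M[R]_(p, q)).

Lemma top_singular_value_ge s u v : dot x x = 1 -> 0 < nrm y ->
  top_singular_triple (x *m y^T + E) s u v -> nrm y - frob E <= s.
Proof.
move=> xx y_gt0 /top_singular_bound Mb.
have := Mb x y; rewrite (nrm_unit xx) mulr1 mulmxDl outer_mulmx dotDr dotZr xx.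
rewrite mulr1 -sqr_nrm.
have := normr_bil_le E x y; rewrite (nrm_unit xx) mulr1 ler_norml => /andP[Exy _] low.
by rewrite -(ler_pM2r y_gt0) mulrBl -expr2; lra.
Qed.

(* The sign condition on the k-th coordinates forces u to be aligned with x
   rather than with -x. *)
Lemma top_singular_rank_one_perturbation s u v k : dot x x = 1 -> 0 < nrm y ->
  top_singular_triple (x *m y^T + E) s u v ->
  0 <= u k 0 -> 0 <= x k 0 -> 4 * frob E < nrm y * x k 0 ^+ 2 ->
  nrm (u - x) ^+ 2 <= 4 * frob E / nrm y /\ nrm (s *: v - y) <= 3 * frob E.
Proof.
move=> xx y_gt0 top uk_ge0 xk_ge0 E_small.
have s_ge := top_singular_value_ge xx y_gt0 top.
have [[s_ge0 uu vv _ MTu] _] := top; rewrite /unit_vec !sqnormE in uu vv.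
have s_le : s <= dot u x * dot y v + frob E.
  have := normr_bil_le E u v; rewrite (nrm_unit uu) (nrm_unit vv) !mulr1.
  rewrite ler_norml -(singular_triple_dot top.1) => /andP[_].
  by rewrite mulmxDl outer_mulmx dotDr dotZr mulrC; lra.
have dl_ge0 := frob_ge0 E.
set c := nrm y in y_gt0 E_small s_ge s_le *; set dl := frob E in E_small s_ge s_le dl_ge0 *.
set t := dot u x in s_le *.
have yv_le : `|dot y v| <= c by rewrite (le_trans (normr_dot_le y v)) // (nrm_unit vv) mulr1.
have t_le1 : t <= 1 by rewrite (le_trans (dot_le_nrm u x)) // (nrm_unit uu) (nrm_unit xx) mulr1.
move: yv_le; rewrite ler_norml => /andP[yv_ge yv_le].
have t_ge0 : 0 <= t.
  rewrite leNgt; apply/negP => t_lt0.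
  have : t * dot y v <= - t * c by nra.
  have : x k 0 ^+ 2 <= 2 + 2 * t.
    have -> : 2 + 2 * t = dot (u + x) (u + x).
      by rewrite !(dotDl, dotDr) uu xx (dotC x u) -/t; ring.
    apply: le_trans (sqr_coord_le _ k); rewrite mxE ler_sqr ?nnegrE ?addr_ge0 //.
    by rewrite lerDr.
  nra.
have ct : c * (1 - t) <= 2 * dl by nra.
split.
- have -> : nrm (u - x) ^+ 2 = 2 - 2 * t.
    by rewrite sqr_nrm !(dotBl, dotBr) uu xx (dotC x u) -/t; ring.
  by rewrite ler_pdivlMr //; lra.
- have -> : s *: v - y = (t - 1) *: y + E^T *m u.
    rewrite -MTu linearD /= mulmxDl trmx_mul trmxK outer_mulmx (dotC x u) -/t.
    by rewrite scalerBl scale1r addrAC.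
  apply: le_trans (nrmD_le _ _) _; rewrite nrmZ -/c ler0_norm ?subr_le0 //.
  have := nrm_mulmx_le E^T u; rewrite frob_trmx -/dl (nrm_unit uu) mulr1; lra.
Qed.

End RankOnePerturbation.

(** * Consistency of the hierarchical SVD *)

Section HierarchicalSVD.
Variable R : realType.

Lemma psd_diag_ge0 n (A : 'M[R]_n) i : psd A -> 0 <= A i i.
Proof. by move=> [_ Apsd]; have := Apsd (delta_mx i 0); rewrite dot_trmx_mul dot_delta mulmx_delta. Qed.

Lemma pd_diag_gt0 n (A : 'M[R]_n) i : pd A -> 0 < A i i.
Proof.
move=> [_ Apd]; have := Apd (delta_mx i 0); rewrite dot_trmx_mul dot_delta mulmx_delta; apply.
by apply/negP => /eqP/matrixP/(_ i 0); rewrite !mxE !eqxx => /eqP; rewrite oner_eq0.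
Qed.

Lemma frob_gt0 m n (A : 'M[R]_(m, n)) i j : 0 < A i j -> 0 < frob A.
Proof.
move=> Aij_gt0; rewrite frob_vecm lt_def nrm_ge0 andbT sqrtr_eq0 -ltNge.
by apply: lt_le_trans (sqr_coord_le _ (pidx i j)); rewrite vecmE exprn_gt0.
Qed.

Lemma frob_eq1_dim_gt0 n (A : 'M[R]_n) : frob A = 1 -> (0 < n)%N.
Proof. by rewrite frob_vecm => /(congr1 (fun r => r ^+ 2)); rewrite sqr_nrm expr1n => /dim_gt0; case: n A. Qed.

Lemma exists_gt0_le_all (s : seq R) :
  all (fun r => 0 < r) s -> exists2 e, 0 < e & all (fun r => e <= r) s.
Proof.
elim: s => [|r s IH] /=; first by exists 1.
move=> /andP[r_gt0 /IH[e e_gt0 e_le]]; exists (Order.min r e).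
  by rewrite lt_min r_gt0.
rewrite ge_min lexx /=; apply: sub_all e_le => r' e_le'.
by rewrite ge_min e_le' orbT.
Qed.

Lemma rearr_top_singular_perturbation m n (X : 'M[R]_(m * n)) (A : 'M[R]_m)
    (B : 'M[R]_n) s u v i :
  top_singular_triple (rearr X) s u v -> psd (unvec u) ->
  0 < A i i -> frob A = 1 -> 0 < frob B ->
  4 * frob (X - kron B A) < frob B * A i i ^+ 2 ->
  frob (unvec u - A) ^+ 2 <= 4 * frob (X - kron B A) / frob B /\
  frob (unvec (s *: v) - B) <= 3 * frob (X - kron B A).
Proof.
move=> top u_psd Aii_gt0 A1 B_gt0 small.
have XE : rearr X = vecm A *m (vecm B)^T + rearr (X - kron B A).
  by rewrite linearB /= rearr_kron addrC subrK.
have xx : dot (vecm A) (vecm A) = 1 by rewrite -sqr_nrm -frob_vecm A1 expr1n.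
have y_gt0 : 0 < nrm (vecm B) by rewrite -frob_vecm.
have uk_ge0 : 0 <= u (pidx i i) 0 by have := psd_diag_ge0 i u_psd; rewrite mxE.
have xk_ge0 : 0 <= vecm A (pidx i i) 0 by rewrite vecmE ltW.
rewrite XE in top.
have [] := top_singular_rank_one_perturbation xx y_gt0 top uk_ge0 xk_ge0.
  by rewrite frob_rearr -frob_vecm vecmE.
rewrite frob_rearr -frob_vecm => err_u err_v.
have -> : frob (unvec u - A) = nrm (u - vecm A) by rewrite frob_vecm linearB /= unvecK.
by have -> : frob (unvec (s *: v) - B) = nrm (s *: v - vecm B)
  by rewrite frob_vecm linearB /= unvecK.
Qed.

Lemma hsvd_error_bound d1 d2 d3 (S1 : 'M[R]_d1) (S2 : 'M[R]_d2) (S3 : 'M[R]_d3)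
    (X : 'M[R]_(d1 * (d2 * d3))) s1 u1 v1 sig1 a1 b1 i1 i2 dl :
  hsvd_choice X s1 u1 v1 sig1 a1 b1 -> psd (hsvd1 u1) -> psd (hsvd2 a1) ->
  0 < S1 i1 i1 -> 0 < S2 i2 i2 -> frob S1 = 1 -> frob S2 = 1 ->
  0 < frob (kron S3 S2) -> 0 < frob S3 ->
  frob (X - kron (kron S3 S2) S1) <= dl ->
  4 * dl < frob (kron S3 S2) * S1 i1 i1 ^+ 2 ->
  12 * dl < frob S3 * S2 i2 i2 ^+ 2 ->
  [/\ frob (hsvd1 u1 - S1) ^+ 2 <= 4 * dl / frob (kron S3 S2),
      frob (hsvd2 a1 - S2) ^+ 2 <= 12 * dl / frob S3 &
      frob (hsvd3 sig1 b1 - S3) <= 9 * dl].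
Proof.
move=> [top1 top2] u1_psd a1_psd S1_gt0 S2_gt0 S1_1 S2_1 c1_gt0 c2_gt0 X_near small1 small2.
have X_ge0 := frob_ge0 (X - kron (kron S3 S2) S1).
have [err1 err2] := rearr_top_singular_perturbation top1 u1_psd S1_gt0 S1_1 c1_gt0
  ltac:(lra).
have X'_ge0 := frob_ge0 (unvec (s1 *: v1) - kron S3 S2).
have [err3 err4] := rearr_top_singular_perturbation top2 a1_psd S2_gt0 S2_1 c2_gt0
  ltac:(lra).
split; last by rewrite /hsvd3; lra.
- by apply: le_trans err1 _; apply: ler_wpM2r; [rewrite invr_ge0 ltW | lra].
- by apply: le_trans err3 _; apply: ler_wpM2r; [rewrite invr_ge0 ltW | lra].
Qed.

Lemma hsvd_error_small d1 d2 d3 (S1 : 'M[R]_d1) (S2 : 'M[R]_d2) (S3 : 'M[R]_d3) :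
  pd S1 -> pd S2 -> pd S3 -> frob S1 = 1 -> frob S2 = 1 ->
  forall eps, 0 < eps -> exists2 eta, 0 < eta &
  forall X s1 u1 v1 sig1 a1 b1,
    hsvd_choice X s1 u1 v1 sig1 a1 b1 -> psd (hsvd1 u1) -> psd (hsvd2 a1) ->
    frob (X - kron (kron S3 S2) S1) <= eta ->
    [/\ frob (hsvd1 u1 - S1) <= eps, frob (hsvd2 a1 - S2) <= eps &
        frob (hsvd3 sig1 b1 - S3) <= eps].
Proof.
move=> S1_pd S2_pd S3_pd S1_1 S2_1 eps eps_gt0.
have [d3_0|d3_gt0] := posnP d3.
  exists 1 => // X s1 u1 v1 sig1 a1 b1 [_ [[_ _ b1_unit _ _] _]].
  rewrite /unit_vec sqnormE in b1_unit; exfalso.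
  by have := dim_gt0 b1_unit; rewrite d3_0.
pose i1 := Ordinal (frob_eq1_dim_gt0 S1_1); pose i2 := Ordinal (frob_eq1_dim_gt0 S2_1).
pose i3 := Ordinal d3_gt0.
have S1ii_gt0 := pd_diag_gt0 i1 S1_pd; have S2ii_gt0 := pd_diag_gt0 i2 S2_pd.
have c1_gt0 : 0 < frob (kron S3 S2).
  apply: (@frob_gt0 _ _ _ (pidx i2 i3) (pidx i2 i3)).
  by rewrite mxE !lo_pidx !hi_pidx mulr_gt0 ?pd_diag_gt0.
have c2_gt0 : 0 < frob S3 := frob_gt0 (pd_diag_gt0 i3 S3_pd).
have [eta eta_gt0] := @exists_gt0_le_all [:: frob (kron S3 S2) * S1 i1 i1 ^+ 2 / 8;
  frob S3 * S2 i2 i2 ^+ 2 / 24; frob (kron S3 S2) * eps ^+ 2 / 4;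
  frob S3 * eps ^+ 2 / 12; eps / 9]
  ltac:(by rewrite /= !divr_gt0 ?mulr_gt0 ?exprn_gt0).
rewrite /= andbT => /and5P[le1 le2 le3 le4 le5].
have : 0 < frob (kron S3 S2) * S1 i1 i1 ^+ 2 by rewrite mulr_gt0 ?exprn_gt0.
have : 0 < frob S3 * S2 i2 i2 ^+ 2 by rewrite mulr_gt0 ?exprn_gt0.
move=> pos2 pos1; exists eta => // X s1 u1 v1 sig1 a1 b1 hc u1_psd a1_psd X_near.
have [err1 err2 err3] := hsvd_error_bound hc u1_psd a1_psd S1ii_gt0 S2ii_gt0 S1_1 S2_1
  c1_gt0 c2_gt0 X_near ltac:(lra) ltac:(lra).
have sqr_le z (e : R) : 0 <= z -> 0 < e -> z ^+ 2 <= e ^+ 2 -> z <= e.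
  by move=> z_ge0 e_gt0; rewrite ler_sqr ?nnegrE ?(ltW e_gt0).
split; last by lra.
- apply: sqr_le; rewrite ?frob_ge0 // (le_trans err1) // ler_pdivrMr //; lra.
- apply: sqr_le; rewrite ?frob_ge0 // (le_trans err2) // ler_pdivrMr //; lra.
Qed.

End HierarchicalSVD.

Lemma conv_in_prob_transfer (R : realType) d (Omega : measurableType d)
    (P : probability Omega R) m n k l (X : nat -> Omega -> 'M[R]_(m, n)) A
    (Y : nat -> Omega -> 'M[R]_(k, l)) B :
  conv_in_prob P X A ->
  (forall eps : R, 0 < eps -> exists2 eta : R, 0 < eta &
     forall T w, frob (X T w - A) <= eta -> frob (Y T w - B) <= eps) ->
  conv_in_prob P Y B.
Proof.
move=> XA XY eps delta eps_gt0 delta_gt0.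
have [eta eta_gt0 XYeta] := XY eps eps_gt0.
have [N XN] := XA eta delta eta_gt0 delta_gt0.
exists N => T NT; have [D [D_meas PD XD]] := XN T NT.
exists D; split => // w /= Yw; apply: XD => /=.
by rewrite ltNge; apply: contraTN Yw => /XYeta; rewrite leNgt.
Qed.

Theorem proposition2 :
  (* (i) *)
  (forall (R : realType) (d1 d2 d3 : nat) (Sc : 'M[R]_(d1 * (d2 * d3))),
    (0 < d1)%N -> (0 < d2)%N -> (0 < d3)%N ->
    psd Sc ->
    exists (s1 : R) (u1 : 'cV[R]_(d1 * d1))
           (v1 : 'cV[R]_((d2 * d3) * (d2 * d3)))
           (sig1 : R) (a1 : 'cV[R]_(d2 * d2)) (b1 : 'cV[R]_(d3 * d3)),
      [/\ hsvd_choice Sc s1 u1 v1 sig1 a1 b1,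
          psd (hsvd1 u1), psd (hsvd2 a1) & psd (hsvd3 sig1 b1)]) /\
  (* (ii) *)
  (forall (R : realType) (d : measure_display) (Omega : measurableType d)
     (P : probability Omega R) (d1 d2 d3 : nat)
     (Sig1 : 'M[R]_d1) (Sig2 : 'M[R]_d2) (Sig3 : 'M[R]_d3)
     (Sc : nat -> Omega -> 'M[R]_(d1 * (d2 * d3)))
     (s1 : nat -> Omega -> R) (u1 : nat -> Omega -> 'cV[R]_(d1 * d1))
     (v1 : nat -> Omega -> 'cV[R]_((d2 * d3) * (d2 * d3)))
     (sig1 : nat -> Omega -> R) (a1 : nat -> Omega -> 'cV[R]_(d2 * d2))
     (b1 : nat -> Omega -> 'cV[R]_(d3 * d3)),
    pd Sig1 -> pd Sig2 -> pd Sig3 ->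
    frob Sig1 = 1 -> frob Sig2 = 1 ->
    (forall T w, psd (Sc T w)) ->
    conv_in_prob P Sc (kron (kron Sig3 Sig2) Sig1) ->
    (forall T w,
      [/\ hsvd_choice (Sc T w) (s1 T w) (u1 T w) (v1 T w)
                      (sig1 T w) (a1 T w) (b1 T w),
          psd (hsvd1 (u1 T w)), psd (hsvd2 (a1 T w))
        & psd (hsvd3 (sig1 T w) (b1 T w))]) ->
    [/\ conv_in_prob P (fun T w => hsvd1 (u1 T w)) Sig1,
        conv_in_prob P (fun T w => hsvd2 (a1 T w)) Sig2
      & conv_in_prob P (fun T w => hsvd3 (sig1 T w) (b1 T w)) Sig3]).
Proof.
split; first exact: hsvd_psd_choice.
move=> R d Omega P d1 d2 d3 S1 S2 S3 Sc s1 u1 v1 sig1 a1 b1 S1_pd S2_pd S3_pd S1_1 S2_1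
  _ Sc_conv hsvd.
have err := hsvd_error_small S1_pd S2_pd S3_pd S1_1 S2_1.
split; apply: (conv_in_prob_transfer Sc_conv) => eps eps_gt0;
  have [eta eta_gt0 err_eta] := err eps eps_gt0; exists eta => // T w Sc_near;
  have [hc u1_psd a1_psd _] := hsvd T w;
  by have [] := err_eta _ _ _ _ _ _ _ hc u1_psd a1_psd Sc_near.
Qed.
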